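(* Let $X$ be a uniformly convex Banach space and $Y$ any Banach space. Then the pair $(X,Y)$ has the sBPBp for compact operators: for every $\varepsilon>0$ and every compact operator $T\in\mathcal{L}(X,Y)$ with $\|T\|=1$ there exists $\eta=\eta(\varepsilon,T)>0$ such that whenever $x_0\in S_X$ satisfies $\|T(x_0)\|>1-\eta$, there exists $x_1\in S_X$ with $\|T(x_1)\|=1$ and $\|x_1-x_0\|<\varepsilon$.
   Context: All Banach spaces are over $\mathbb{K}=\mathbb{R}$ or $\mathbb{C}$. $S_X$ denotes the unit sphere of $X$ and $\mathcal{L}(X,Y)$ the space of bounded linear operators from $X$ to $Y$ with the operator norm. An operator is compact if the closure of the image of the unit ball is compact. *)

From Stdlib Require Import Reals Lra List.
Open Scope R_scope.

Record NormedSpace := {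
  carrier :> Type;
  vzero : carrier;
  vadd : carrier -> carrier -> carrier;
  vopp : carrier -> carrier;
  vscal : R -> carrier -> carrier;
  vnorm : carrier -> R;
  vadd_assoc : forall x y z, vadd x (vadd y z) = vadd (vadd x y) z;
  vadd_comm : forall x y, vadd x y = vadd y x;
  vadd_0 : forall x, vadd x vzero = x;
  vadd_opp : forall x, vadd x (vopp x) = vzero;
  vscal_assoc : forall a b x, vscal a (vscal b x) = vscal (a * b) x;
  vscal_1 : forall x, vscal 1 x = x;
  vscal_distr_l : forall a x y, vscal a (vadd x y) = vadd (vscal a x) (vscal a y);
  vscal_distr_r : forall a b x, vscal (a + b) x = vadd (vscal a x) (vscal b x);
  vnorm_nonneg : forall x, 0 <= vnorm x;
  vnorm_eq0 : forall x, vnorm x = 0 -> x = vzero;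
  vnorm_triangle : forall x y, vnorm (vadd x y) <= vnorm x + vnorm y;
  vnorm_scal : forall a x, vnorm (vscal a x) = Rabs a * vnorm x
}.

Arguments vzero {n}.
Arguments vadd {n}.
Arguments vopp {n}.
Arguments vscal {n}.
Arguments vnorm {n}.

Definition vsub {X : NormedSpace} (x y : X) : X := vadd x (vopp y).

Definition complete (X : NormedSpace) : Prop :=
  forall u : nat -> X,
    (forall eps, 0 < eps -> exists N, forall m n, (N <= m)%nat -> (N <= n)%nat ->
        vnorm (vsub (u m) (u n)) < eps) ->
    exists l : X, forall eps, 0 < eps -> exists N, forall n, (N <= n)%nat ->
        vnorm (vsub (u n) l) < eps.

Definition Banach (X : NormedSpace) : Prop := complete X.

Definition uniformly_convex (X : NormedSpace) : Prop :=
  forall eps, 0 < eps -> exists delta, 0 < delta /\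
    forall x y : X, vnorm x <= 1 -> vnorm y <= 1 -> eps <= vnorm (vsub x y) ->
      vnorm (vscal (1/2) (vadd x y)) <= 1 - delta.

Definition linear_map {X Y : NormedSpace} (T : X -> Y) : Prop :=
  (forall x y, T (vadd x y) = vadd (T x) (T y)) /\
  (forall a x, T (vscal a x) = vscal a (T x)).

Definition bounded_linear {X Y : NormedSpace} (T : X -> Y) : Prop :=
  linear_map T /\ exists M, forall x, vnorm (T x) <= M * vnorm x.

Definition op_norm_is {X Y : NormedSpace} (T : X -> Y) (c : R) : Prop :=
  is_lub (fun r => exists x : X, vnorm x <= 1 /\ r = vnorm (T x)) c.

Definition open_set {Y : NormedSpace} (U : Y -> Prop) : Prop :=
  forall y, U y -> exists r, 0 < r /\ forall z, vnorm (vsub z y) < r -> U z.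

Definition closure {Y : NormedSpace} (A : Y -> Prop) : Y -> Prop :=
  fun y => forall r, 0 < r -> exists a, A a /\ vnorm (vsub y a) < r.

Definition compact_set {Y : NormedSpace} (K : Y -> Prop) : Prop :=
  forall (I : Type) (U : I -> Y -> Prop),
    (forall i, open_set (U i)) ->
    (forall y, K y -> exists i, U i y) ->
    exists l : list I, forall y, K y -> exists i, In i l /\ U i y.

Definition compact_operator {X Y : NormedSpace} (T : X -> Y) : Prop :=
  bounded_linear T /\
  compact_set (closure (fun y : Y => exists x : X, vnorm x <= 1 /\ y = T x)).

(** Uniform convexity makes near-norming points rigid: two vectors of the ball
    whose images both have norm close to 1 and are close to each other must be
    close, since otherwise their midpoint would have norm bounded away from 1
    while its image would not.  Compactness of [T] covers the image of the ball
    by finitely many small balls; each of them either contains images of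
    near-norming points of arbitrarily small defect, or avoids all of them below
    some positive threshold, and finitely many thresholds have a positive
    minimum.  Hence there is [e > 0] such that every unit vector [x] with
    [||T x|| > 1 - e] has near-norming points of arbitrarily small defect
    within a prescribed distance of it.  Iterating with geometrically shrinking
    distances gives a Cauchy sequence whose limit is a norming point close to
    the starting one. *)
From Pilot Require Import Defs.
From Stdlib Require Import Reals.
From Stdlib Require Import Lra Lia List Classical ClassicalEpsilon.
Open Scope R_scope.

Section NormedSpaceFacts.
Variable X : NormedSpace.
Implicit Types a b c x : X.

Lemma vadd_cancel a b c : vadd a b = vadd a c -> b = c.
Proof.
  intro H.
  assert (E : forall d, d = vadd (vopp a) (vadd a d)).
  { intro d. rewrite vadd_assoc, (vadd_comm X (vopp a) a), vadd_opp, vadd_comm, vadd_0.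
    reflexivity. }
  rewrite (E b), (E c), H. reflexivity.
Qed.

Lemma vscal0 x : vscal 0 x = vzero.
Proof.
  apply (vadd_cancel (vscal 0 x)). rewrite vadd_0, <- vscal_distr_r. f_equal; ring.
Qed.

Lemma vnorm0 : vnorm (@vzero X) = 0.
Proof. rewrite <- (vscal0 vzero), vnorm_scal, Rabs_R0. ring. Qed.

Lemma vopp_scal x : vopp x = vscal (-1) x.
Proof.
  apply (vadd_cancel x). rewrite vadd_opp. rewrite <- (vscal_1 X x) at 1.
  rewrite <- vscal_distr_r. replace (1 + -1) with 0 by ring. now rewrite vscal0.
Qed.

Lemma vnorm_opp x : vnorm (vopp x) = vnorm x.
Proof.
  rewrite vopp_scal, vnorm_scal, Rabs_left by lra. ring.
Qed.

Lemma vsub_self a : vsub a a = vzero.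
Proof. apply vadd_opp. Qed.

Lemma vnorm_sub_triangle a b c : vnorm (vsub a c) <= vnorm (vsub a b) + vnorm (vsub b c).
Proof.
  replace (vsub a c) with (vadd (vsub a b) (vsub b c)) by
    (unfold vsub; rewrite <- vadd_assoc, (vadd_assoc X (vopp b)), (vadd_comm X (vopp b) b),
       vadd_opp, (vadd_comm X vzero), vadd_0; reflexivity).
  apply vnorm_triangle.
Qed.

Lemma vnorm_sub_sym a b : vnorm (vsub a b) = vnorm (vsub b a).
Proof.
  rewrite <- vnorm_opp. f_equal. unfold vsub.
  rewrite !vopp_scal, vscal_distr_l, vscal_assoc.
  replace (-1 * -1) with 1 by ring. rewrite vscal_1, vadd_comm. reflexivity.
Qed.

Lemma vnorm_sub_ge a b : vnorm a - vnorm b <= vnorm (vsub a b).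
Proof.
  replace a with (vadd (vsub a b) b) at 1 by
    (unfold vsub; rewrite <- vadd_assoc, (vadd_comm X (vopp b)), vadd_opp, vadd_0; reflexivity).
  pose proof (vnorm_triangle X (vsub a b) b). lra.
Qed.

Lemma vnorm_add_sub_ge a b : 2 * vnorm a <= vnorm (vadd a b) + vnorm (vsub a b).
Proof.
  assert (E : vadd (vadd a b) (vsub a b) = vscal 2 a).
  { unfold vsub. rewrite vadd_assoc, <- (vadd_assoc X a b a), (vadd_comm X b a), vadd_assoc,
      <- (vadd_assoc X (vadd a a) b (vopp b)), vadd_opp, vadd_0.
    replace 2 with (1 + 1) by ring. rewrite vscal_distr_r, vscal_1. reflexivity. }
  replace (2 * vnorm a) with (vnorm (vscal 2 a)) by (rewrite vnorm_scal, Rabs_right; lra).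
  rewrite <- E. apply vnorm_triangle.
Qed.

(* Qualified: Stdlib's Rtopology also defines [open_set]. *)
Lemma open_set_ball (c : X) (r : R) : Defs.open_set (fun x : X => vnorm (vsub x c) < r).
Proof.
  intros y Hy. exists (r - vnorm (vsub y c)). split; [lra|].
  intros z Hz. pose proof (vnorm_sub_triangle z y c). lra.
Qed.

End NormedSpaceFacts.

Lemma half_pow_pos n : 0 < (1/2)^n.
Proof. apply pow_lt; lra. Qed.

Lemma half_pow_small c r : 0 < r -> exists n, c * (1/2)^n < r.
Proof.
  intro Hr. destruct (Rle_or_lt c 0) as [Hc|Hc].
  - exists 0%nat. simpl. lra.
  - destruct (pow_lt_1_zero (1/2)) with (y := r / c) as [n Hn].
    + rewrite Rabs_right; lra.
    + apply Rdiv_lt_0_compat; lra.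
    + exists n. specialize (Hn n (le_n n)). rewrite Rabs_right in Hn.
      2: apply Rle_ge, Rlt_le, half_pow_pos.
      apply (Rmult_lt_compat_l c) in Hn; [|lra].
      replace (c * (r / c)) with r in Hn by (field; lra). exact Hn.
Qed.

Section GeometricSteps.
Variable X : NormedSpace.
Variable u : nat -> X.
Variable c : R.
Hypothesis steps : forall n, vnorm (vsub (u (S n)) (u n)) <= c * (1/2)^n.

Lemma geometric_steps_bound m n : (m <= n)%nat -> vnorm (vsub (u n) (u m)) <= 2 * c * (1/2)^m.
Proof.
  intro Hmn.
  assert (partial : forall j, vnorm (vsub (u (m + j)%nat) (u m)) <= 2 * c * (1/2)^m * (1 - (1/2)^j)).
  { induction j as [|j IH].
    - rewrite Nat.add_0_r, vsub_self, vnorm0. simpl. lra.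
    - rewrite Nat.add_succ_r, <- tech_pow_Rmult.
      pose proof (vnorm_sub_triangle X (u (S (m + j))) (u (m + j)%nat) (u m)).
      pose proof (steps (m + j)). rewrite pow_add in *. nra. }
  assert (c_nonneg : 0 <= c).
  { pose proof (steps 0) as H0. pose proof (vnorm_nonneg X (vsub (u 1%nat) (u 0%nat))).
    simpl in H0. lra. }
  replace n with (m + (n - m))%nat by lia.
  pose proof (partial (n - m)%nat).
  pose proof (Rmult_le_pos _ _ (Rmult_le_pos _ _ c_nonneg (Rlt_le _ _ (half_pow_pos m)))
                (Rlt_le _ _ (half_pow_pos (n - m)))).
  nra.
Qed.

Lemma geometric_steps_limit : complete X -> exists l, forall m, vnorm (vsub (u m) l) <= 2 * c * (1/2)^m.
Proof.
  intro HX. destruct (HX u) as [l Hl].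
  { intros r Hr. destruct (half_pow_small (4 * c) r Hr) as [N HN].
    exists N. intros m n Hm Hn.
    pose proof (vnorm_sub_triangle X (u m) (u N) (u n)).
    pose proof (geometric_steps_bound N m Hm). pose proof (geometric_steps_bound N n Hn).
    rewrite (vnorm_sub_sym X (u N)) in *. lra. }
  exists l. intro m. apply Rle_plus_epsilon. intros r Hr.
  destruct (Hl r Hr) as [N HN].
  pose proof (HN (Nat.max N m) (Nat.le_max_l N m)).
  pose proof (geometric_steps_bound m (Nat.max N m) (Nat.le_max_r N m)).
  pose proof (vnorm_sub_triangle X (u m) (u (Nat.max N m)) l).
  rewrite vnorm_sub_sym in H0. lra.
Qed.

End GeometricSteps.

Lemma dependent_iteration {A : Type} (P : nat -> A -> Prop) (Rel : nat -> A -> A -> Prop) :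
  (forall k a, P k a -> exists b, P (S k) b /\ Rel k a b) ->
  forall a0, P 0%nat a0 ->
  exists u : nat -> A, u 0%nat = a0 /\ forall k, P k (u k) /\ Rel k (u k) (u (S k)).
Proof.
  intros step a0 H0.
  destruct (choice (fun (ka : nat * A) b => P (fst ka) (snd ka) -> P (S (fst ka)) b /\ Rel (fst ka) (snd ka) b))
    as [next Hnext].
  { intros [k a]. destruct (classic (P k a)) as [Ha|Ha].
    - destruct (step k a Ha) as [b Hb]. exists b. auto.
    - exists a. intro; contradiction. }
  set (u := nat_rect (fun _ => A) a0 (fun k a => next (k, a))).
  assert (Pu : forall k, P k (u k)).
  { induction k as [|k IH]; [exact H0|]. exact (proj1 (Hnext (k, u k) IH)). }
  exists u. split; [reflexivity|]. intro k. split; [apply Pu|]. exact (proj2 (Hnext (k, u k) (Pu k))).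
Qed.

Lemma list_uniform_threshold {I : Type} (l : list I) (P : I -> R -> Prop) :
  (forall i e e', 0 < e' <= e -> P i e -> P i e') ->
  (forall i, In i l -> exists e, 0 < e /\ P i e) ->
  exists e, 0 < e /\ forall i, In i l -> P i e.
Proof.
  intros mono. induction l as [|a l IH]; intro Hl.
  - exists 1. split; [lra|]. intros i [].
  - destruct (Hl a (in_eq a l)) as [ea [Hea Pa]].
    destruct IH as [el [Hel Pl]]; [intros i Hi; apply Hl, in_cons, Hi|].
    exists (Rmin ea el). split; [apply Rmin_pos; assumption|].
    pose proof (Rmin_l ea el). pose proof (Rmin_r ea el). pose proof (Rmin_pos ea el Hea Hel).
    intros i [<-|Hi].
    + apply (mono a ea); auto.
    + apply (mono i el); auto.
Qed.

Section Operator.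
Variables X Y : NormedSpace.
Variable T : X -> Y.
Hypothesis T_linear : linear_map T.

Lemma linear_map0 : T vzero = vzero.
Proof. rewrite <- (vscal0 X vzero), (proj2 T_linear), vscal0. reflexivity. Qed.

Lemma linear_map_sub a b : T (vsub a b) = vsub (T a) (T b).
Proof. unfold vsub. rewrite (proj1 T_linear), !vopp_scal, (proj2 T_linear). reflexivity. Qed.

Lemma op_norm_is_le c w : op_norm_is T c -> vnorm (T w) <= c * vnorm w.
Proof.
  intro Tn. destruct (Req_dec (vnorm w) 0) as [Hw|Hw].
  - apply vnorm_eq0 in Hw. subst w. rewrite linear_map0, !vnorm0. lra.
  - pose proof (vnorm_nonneg X w) as Hw0.
    assert (Hinv : 0 < / vnorm w) by (apply Rinv_0_lt_compat; lra).
    assert (Hunit : vnorm (T (vscal (/ vnorm w) w)) <= c).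
    { apply (proj1 Tn). exists (vscal (/ vnorm w) w). split; [|reflexivity].
      rewrite vnorm_scal, Rabs_right, Rinv_l; lra. }
    rewrite (proj2 T_linear), vnorm_scal, Rabs_right in Hunit by lra.
    apply (Rmult_le_compat_l (vnorm w)) in Hunit; [|lra].
    rewrite <- Rmult_assoc, Rinv_r in Hunit; lra.
Qed.

Definition near_norming (e : R) (x : X) : Prop := vnorm x = 1 /\ 1 - e < vnorm (T x).

Lemma near_norming_mono e e' x : e <= e' -> near_norming e x -> near_norming e' x.
Proof. intros He [Hx HTx]. split; [exact Hx | lra]. Qed.

Hypothesis T_contraction : forall w, vnorm (T w) <= vnorm w.

Lemma near_norming_limit l :
  (forall r, 0 < r -> exists x, near_norming r x /\ vnorm (vsub x l) < r) ->
  vnorm l = 1 /\ vnorm (T l) = 1.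
Proof.
  intro approx.
  assert (Hl : vnorm l = 1).
  { apply Rle_antisym; apply Rle_plus_epsilon; intros r Hr;
      destruct (approx r Hr) as [x [[Hx _] Hxl]];
      pose proof (vnorm_sub_ge X x l); pose proof (vnorm_sub_ge X l x) as Hlx;
      rewrite vnorm_sub_sym in Hlx; lra. }
  split; [exact Hl|].
  apply Rle_antisym; [rewrite <- Hl; apply T_contraction|].
  apply Rle_plus_epsilon. intros r Hr.
  destruct (approx (r / 2)) as [x [[_ HTx] Hxl]]; [lra|].
  pose proof (vnorm_sub_ge Y (T x) (T l)).
  pose proof (T_contraction (vsub x l)). rewrite linear_map_sub in *. lra.
Qed.

Lemma uniformly_convex_norming_close delta : uniformly_convex X -> 0 < delta ->
  exists e, 0 < e /\ forall x z, vnorm x <= 1 -> vnorm z <= 1 ->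
    1 - e < vnorm (T x) -> 1 - e < vnorm (T z) -> vnorm (vsub (T x) (T z)) < e ->
    vnorm (vsub x z) < delta.
Proof.
  intros UC Hdelta. destruct (UC delta Hdelta) as [d [Hd Hmid]].
  exists (d / 2). split; [lra|]. intros x z Hx Hz HTx HTz HTxz.
  destruct (Rlt_or_le (vnorm (vsub x z)) delta) as [|Hfar]; [assumption|].
  specialize (Hmid x z Hx Hz Hfar).
  pose proof (T_contraction (vscal (1/2) (vadd x z))) as Hmid'.
  rewrite (proj2 T_linear), (proj1 T_linear), vnorm_scal, Rabs_right in Hmid' by lra.
  pose proof (vnorm_add_sub_ge Y (T x) (T z)). lra.
Qed.

Lemma compact_operator_finite_net r : compact_operator T -> 0 < r ->
  exists centers : list Y, forall x, vnorm x <= 1 ->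
    exists c, In c centers /\ vnorm (vsub (T x) c) < r.
Proof.
  intros [_ Hcompact] Hr.
  destruct (Hcompact Y (fun c y => vnorm (vsub y c) < r)) as [centers Hcover].
  - intro c. apply open_set_ball.
  - intros y _. exists y. rewrite vsub_self, vnorm0. exact Hr.
  - exists centers. intros x Hx. apply Hcover. intros s Hs. exists (T x). split.
    + exists x. auto.
    + rewrite vsub_self, vnorm0. exact Hs.
Qed.

Definition approached_by_norming (r : R) (c : Y) : Prop :=
  forall rho, 0 < rho -> exists z, near_norming rho z /\ vnorm (vsub (T z) c) < r.

Lemma near_norming_refinement delta : uniformly_convex X -> compact_operator T -> 0 < delta ->
  exists e, 0 < e <= delta /\ forall x, near_norming e x ->
    forall rho, 0 < rho -> exists z, near_norming rho z /\ vnorm (vsub z x) < delta.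
Proof.
  intros UC Tc Hdelta.
  destruct (uniformly_convex_norming_close delta UC Hdelta) as [e0 [He0 rigid]].
  destruct (compact_operator_finite_net (e0 / 2) Tc) as [centers Hnet]; [lra|].
  destruct (list_uniform_threshold centers (fun c e => approached_by_norming (e0 / 2) c \/
              forall z, near_norming e z -> e0 / 2 <= vnorm (vsub (T z) c)))
    as [e1 [He1 Hcenters]].
  - intros c e e' He' [Happ|Hfar]; [left; exact Happ|right].
    intros z Hz. apply Hfar, (near_norming_mono e'); [lra | exact Hz].
  - intros c _. destruct (classic (approached_by_norming (e0 / 2) c)) as [Happ|Hnot].
    + exists 1. split; [lra | left; exact Happ].
    + apply not_all_ex_not in Hnot as [rho Hrho].
      apply imply_to_and in Hrho as [Hrho Hnone].
      exists rho. split; [exact Hrho|right].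
      intros z Hz. apply Rnot_lt_le. intro Hzc. apply Hnone. exists z. auto.
  - pose proof (Rmin_l e0 e1). pose proof (Rmin_r e0 e1).
    pose proof (Rmin_l (Rmin e0 e1) delta). pose proof (Rmin_r (Rmin e0 e1) delta).
    exists (Rmin (Rmin e0 e1) delta). split; [split; [repeat apply Rmin_pos|]; lra|].
    intros x Hx rho Hrho.
    destruct (Hnet x (Req_le _ _ (proj1 Hx))) as [c [Hc Hxc]].
    destruct (Hcenters c Hc) as [Happ|Hfar].
    + destruct (Happ (Rmin rho e0)) as [z [Hz Hzc]]; [apply Rmin_pos; assumption|].
      pose proof (Rmin_l rho e0). pose proof (Rmin_r rho e0).
      exists z. split; [apply (near_norming_mono (Rmin rho e0)); [lra | exact Hz]|].
      destruct Hz as [Hz HTz]. destruct Hx as [Hx1 HTx].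
      apply rigid; try lra.
      pose proof (vnorm_sub_triangle Y (T z) c (T x)).
      rewrite (vnorm_sub_sym Y c (T x)) in *. lra.
    + exfalso. assert (Hx1 : near_norming e1 x) by (revert Hx; apply near_norming_mono; lra).
      pose proof (Hfar x Hx1). lra.
Qed.

End Operator.

Theorem mainTheorem2 (X Y : NormedSpace) :
  Banach X -> uniformly_convex X -> Banach Y ->
  forall eps, 0 < eps ->
  forall T : X -> Y, compact_operator T -> op_norm_is T 1 ->
  exists eta, 0 < eta /\
    forall x0 : X, vnorm x0 = 1 -> vnorm (T x0) > 1 - eta ->
      exists x1 : X, vnorm x1 = 1 /\ vnorm (T x1) = 1 /\ vnorm (vsub x1 x0) < eps.
Proof.
  intros HX UC _ eps Heps T Tc Tn.
  pose proof (proj1 (proj1 Tc)) as T_linear.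
  assert (T_contraction : forall w, vnorm (T w) <= vnorm w).
  { intro w. rewrite <- (Rmult_1_l (vnorm w)). exact (op_norm_is_le X Y T T_linear 1 w Tn). }
  set (step k := eps / 4 * (1/2)^k).
  destruct (choice (fun k e => 0 < e <= step k /\ forall x, near_norming X Y T e x ->
     forall rho, 0 < rho -> exists z, near_norming X Y T rho z /\ vnorm (vsub z x) < step k))
    as [e He].
  { intro k. apply near_norming_refinement; try assumption.
    apply Rmult_lt_0_compat; [lra | apply half_pow_pos]. }
  exists (e 0%nat). split; [apply (He 0%nat)|]. intros x0 Hx0 HTx0.
  destruct (dependent_iteration (fun k => near_norming X Y T (e k))
              (fun k x z => vnorm (vsub z x) < step k)) with (a0 := x0)
    as [u [Hu0 Hu]].
  { intros k x Hx. apply (proj2 (He k) x Hx (e (S k))), (He (S k)). }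
  { split; [exact Hx0 | lra]. }
  destruct (geometric_steps_limit X u (eps / 4)) as [l Hl]; [intro n; apply Rlt_le, Hu | exact HX|].
  destruct (near_norming_limit X Y T T_linear T_contraction l) as [Hl1 HTl1].
  { intros r Hr. destruct (half_pow_small (eps / 2) r Hr) as [n Hn].
    exists (u n). pose proof (Hl n). pose proof (proj1 (He n)). pose proof (half_pow_pos n).
    unfold step in *. split.
    - apply (near_norming_mono X Y T (e n)); [lra | apply Hu].
    - lra. }
  exists l. repeat split; try assumption.
  pose proof (Hl 0%nat) as Hl0. rewrite Hu0, vnorm_sub_sym in Hl0. simpl in Hl0. lra.
Qed.
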